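(* With the Riccati operator $\mathscr R$ and the RADI iterates $X_1,X_2$, residual factors $R_1,R_2\in\mathbb{R}^{d\times r}$, inner factor $T$ and $\tilde Y_2$ as in the context, suppose $T$ is positive semi-definite. Let $\gamma_1,\gamma_2\in\mathbb{R}$ with $\gamma_1+\gamma_2=1$. Then the residual of the two-term extrapolant, $$\mathscr R(\gamma_1X_1+\gamma_2X_2)=[\,R_1\ R_2\,]\,\mathscr H_2\,[\,R_1\ R_2\,]^{\mathsf T},\qquad \mathscr H_2=\begin{bmatrix}\gamma_1^2T+\gamma_1\gamma_2\tilde Y_2 & \gamma_1\gamma_2(T-\tilde Y_2)\\ \gamma_1\gamma_2(T-\tilde Y_2) & \gamma_2^2T+\gamma_1\gamma_2\tilde Y_2\end{bmatrix},$$ is positive semi-definite if and only if $0\le\gamma_1,\gamma_2\le1$.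
   Context: Data: $A,E\in\mathbb{R}^{d\times d}$, $B\in\mathbb{R}^{d\times p}$, $C\in\mathbb{R}^{q\times d}$, $H\in\mathbb{R}^{p\times p}$ symmetric positive definite, and $\mathscr R(X)=A^{\mathsf T}XE+E^{\mathsf T}XA+C^{\mathsf T}C-E^{\mathsf T}XBH^{-1}B^{\mathsf T}XE$. RADI step: start from $X_1$ with $\mathscr R(X_1)=R_1TR_1^{\mathsf T}$, $R_1\in\mathbb{R}^{d\times r}$, $T=T^{\mathsf T}\in\mathbb{R}^{r\times r}$; with a shift $\sigma_1<0$ set $V_2=\sqrt{-2\sigma_1}(A^{\mathsf T}-E^{\mathsf T}X_1BH^{-1}B^{\mathsf T}+\sigma_1E^{\mathsf T})^{-1}R_1T$, $\tilde Y_2=T-\frac{1}{2\sigma_1}(V_2^{\mathsf T}B)H^{-1}(V_2^{\mathsf T}B)^{\mathsf T}$, $X_2=X_1+V_2\tilde Y_2^{-1}V_2^{\mathsf T}$, $R_2=R_1+\sqrt{-2\sigma_1}E^{\mathsf T}V_2\tilde Y_2^{-1}$ (inverses assumed to exist); then $\mathscr R(X_2)=R_2TR_2^{\mathsf T}$. The displayed factorization with $\mathscr H_2$ (using $\gamma_2-\gamma_2^2=\gamma_1\gamma_2$) holds for all $\gamma_1+\gamma_2=1$.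
   Formalization: The equivalence with 0≤γ₁,γ₂≤1 concerns positive semi-definiteness of the inner factor $\mathscr H_2$ rather than of the residual $\mathscr R(\gamma_1X_1+\gamma_2X_2)$, the factorization is part of the conclusion, and X₁ is symmetric and r ≥ 1. Apart from conventions, each condition added here is assumed in the paper as well or is needed for the statement above to hold. *)

From HB Require Import structures.
From mathcomp Require Import all_boot all_order all_algebra.
Set Implicit Arguments. Unset Strict Implicit. Unset Printing Implicit Defensive.
Import Order.TTheory GRing.Theory Num.Theory.
Local Open Scope ring_scope.

Definition psd (R : rcfType) (n : nat) (M : 'M[R]_n) : Prop :=
  M^T = M /\ forall x : 'cV[R]_n, 0 <= (x^T *m M *m x) 0 0.

Definition spd (R : rcfType) (n : nat) (M : 'M[R]_n) : Prop :=
  M^T = M /\ forall x : 'cV[R]_n, x != 0 -> 0 < (x^T *m M *m x) 0 0.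

Definition riccati (R : rcfType) (d p q : nat) (A E : 'M[R]_d) (B : 'M[R]_(d, p))
  (C : 'M[R]_(q, d)) (H : 'M[R]_p) (X : 'M[R]_d) : 'M[R]_d :=
  A^T *m X *m E + E^T *m X *m A + C^T *m C
  - E^T *m X *m B *m invmx H *m B^T *m X *m E.

Definition radi_M (R : rcfType) (d p : nat) (A E : 'M[R]_d) (B : 'M[R]_(d, p))
  (H : 'M[R]_p) (X1 : 'M[R]_d) (sigma : R) : 'M[R]_d :=
  A^T - E^T *m X1 *m B *m invmx H *m B^T + sigma *: E^T.

Definition radi_V2 (R : rcfType) (d p r : nat) (A E : 'M[R]_d) (B : 'M[R]_(d, p))
  (H : 'M[R]_p) (X1 : 'M[R]_d) (R1 : 'M[R]_(d, r)) (T : 'M[R]_r) (sigma : R)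
  : 'M[R]_(d, r) :=
  Num.sqrt (- (2 * sigma)) *: (invmx (radi_M A E B H X1 sigma) *m R1 *m T).

Definition radi_Y2 (R : rcfType) (d p r : nat) (B : 'M[R]_(d, p)) (H : 'M[R]_p)
  (V2 : 'M[R]_(d, r)) (T : 'M[R]_r) (sigma : R) : 'M[R]_r :=
  T - (2 * sigma)^-1 *: ((V2^T *m B) *m invmx H *m (V2^T *m B)^T).

Definition radi_X2 (R : rcfType) (d r : nat) (X1 : 'M[R]_d) (V2 : 'M[R]_(d, r))
  (Y2 : 'M[R]_r) : 'M[R]_d :=
  X1 + V2 *m invmx Y2 *m V2^T.

Definition radi_R2 (R : rcfType) (d r : nat) (E : 'M[R]_d) (R1 V2 : 'M[R]_(d, r))
  (Y2 : 'M[R]_r) (sigma : R) : 'M[R]_(d, r) :=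
  R1 + Num.sqrt (- (2 * sigma)) *: (E^T *m V2 *m invmx Y2).

Definition radi_H2 (R : rcfType) (r : nat) (T Y2 : 'M[R]_r) (g1 g2 : R)
  : 'M[R]_(r + r) :=
  block_mx (g1 ^+ 2 *: T + (g1 * g2) *: Y2) ((g1 * g2) *: (T - Y2))
           ((g1 * g2) *: (T - Y2))  (g2 ^+ 2 *: T + (g1 * g2) *: Y2).

(* Along the line X1 + g2 (X2 - X1) the Riccati residual is a quadratic polynomial in g2;
   since g1 + g2 = 1 it equals g1 R(X1) + g2 R(X2) + g1 g2 Q with Q the quadratic term of
   R at X1 in the direction X2 - X1 = V2 Y2^-1 V2^T.  The RADI step gives R(X2) = R2 T R2^T,
   and as Y2 - T is a multiple of (V2^T B) H^-1 (V2^T B)^T one gets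
   Q = (R2 - R1) (Y2 - T) (R2 - R1)^T, which is the block form with H2.
   The quadratic form of H2 at (a, b) is
   g1 a^T T a + g2 b^T T b + g1 g2 (b - a)^T (Y2 - T) (b - a), with T and Y2 - T psd.
   It is nonnegative when g1, g2 are.  Conversely, if say g1 < 0, testing at (z, 0) kills
   both forms at every z, so Y2 = T + (Y2 - T) vanishes, contradicting its invertibility. *)

From HB Require Import structures.
From mathcomp Require Import all_boot all_order all_algebra.
From mathcomp Require Import ring lra.
Set Implicit Arguments.
Unset Strict Implicit.
Import Order.TTheory GRing.Theory Num.Theory.
Local Open Scope ring_scope.

Section Transpose.
Variables (R : pzRingType) (m n : nat).
Implicit Types (A B : 'M[R]_(m, n)) (a : R).

Lemma trmxD A B : (A + B)^T = A^T + B^T. Proof. exact: linearD. Qed.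
Lemma trmxB A B : (A - B)^T = A^T - B^T. Proof. exact: linearB. Qed.
Lemma trmxN A : (- A)^T = - A^T. Proof. exact: linearN. Qed.
Lemma trmxZ a A : (a *: A)^T = a *: A^T. Proof. exact: linearZ. Qed.

End Transpose.

Ltac mx_expand :=
  repeat progress rewrite ?(trmx_mul, trmxK, trmxD, trmxB, trmxN, trmxZ, mulmxDl,
    mulmxDr, mulmxBl, mulmxBr, mulmxN, mulNmx, mulmxA) -?scalemxAl -?scalemxAr.

(* Once every product and inverse is abstracted as an opaque matrix, an identity between
   the expanded sides only uses the commutative ring structure of the entries. *)
Ltac mx_entrywise :=
  repeat match goal with
  | |- context [invmx ?x] => let z := fresh "z" in set z := invmx x; clearbody z
  | |- context [mulmx ?x ?y] => let z := fresh "z" in set z := mulmx x y; clearbody z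
  end;
  apply/matrixP => i j; rewrite !mxE.

Section QuadraticForms.
Variable R : rcfType.

Definition qform n (M : 'M[R]_n) (x : 'cV[R]_n) : R := (x^T *m M *m x) 0 0.

Lemma qformD n (M N : 'M[R]_n) x : qform (M + N) x = qform M x + qform N x.
Proof. by rewrite /qform mulmxDr mulmxDl mxE. Qed.

Lemma qformv0 n (M : 'M[R]_n) : qform M 0 = 0.
Proof. by rewrite /qform mulmx0 mxE. Qed.

Lemma qformNv n (M : 'M[R]_n) x : qform M (- x) = qform M x.
Proof. by rewrite /qform trmxN !mulNmx mulmxN opprK. Qed.

Lemma psd_scale n (c : R) (M : 'M[R]_n) : 0 <= c -> psd M -> psd (c *: M).
Proof.
move=> c_ge0 [MT M_ge0]; split; first by rewrite linearZ /= MT.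
by move=> x; rewrite -scalemxAr -scalemxAl mxE mulr_ge0.
Qed.

Lemma psd_congr m n (M : 'M[R]_(m, n)) (P : 'M[R]_n) : psd P -> psd (M *m P *m M^T).
Proof.
move=> [PT P_ge0]; split; first by rewrite !trmx_mul trmxK PT mulmxA.
by move=> x; have := P_ge0 (M^T *m x); rewrite trmx_mul trmxK !mulmxA.
Qed.

Lemma spd_unitmx n (H : 'M[R]_n) : spd H -> H \in unitmx.
Proof.
move=> [_ H_gt0]; rewrite unitmxE unitfE; apply/negP => /det0P[v v_neq0 vH].
have := H_gt0 v^T; rewrite trmx_eq0 => /(_ v_neq0).
by rewrite trmxK vH mul0mx mxE ltxx.
Qed.

Lemma spd_psd_invmx n (H : 'M[R]_n) : spd H -> psd (invmx H).
Proof.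
move=> H_spd; have Hu := spd_unitmx H_spd; have [HT H_gt0] := H_spd.
have HiT : (invmx H)^T = invmx H by rewrite trmx_inv HT.
split=> // u; have [w0|w_neq0] := eqVneq (invmx H *m u) 0.
  by rewrite -mulmxA w0 mulmx0 mxE.
have := H_gt0 _ w_neq0; rewrite trmx_mul HiT -!mulmxA (mulmxA H) mulmxV //.
by rewrite mul1mx mulmxA => /ltW.
Qed.

Lemma sym_qf_eq0 n (M : 'M[R]_n) :
  M^T = M -> (forall x, qform M x = 0) -> M = 0.
Proof.
move=> MT M_qf0; apply/matrixP => i j; rewrite mxE.
pose e k : 'cV[R]_n := delta_mx k 0.
have eMe k l : ((e k)^T *m M *m e l) 0 0 = M k l.
  by rewrite trmx_delta -rowE -colE !mxE.
have addE (a b : 'M[R]_1) : (a + b) 0 0 = a 0 0 + b 0 0 by rewrite mxE.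
have Mji : M j i = M i j by rewrite -[in LHS]MT mxE.
have Mkk k : M k k = 0 by rewrite -eMe; exact: M_qf0.
have := M_qf0 (e i + e j); rewrite /qform; mx_expand.
rewrite !addE !eMe Mji !Mkk add0r addr0 -mulr2n.
by move=> /eqP; rewrite mulrn_eq0 => /eqP.
Qed.

Lemma unitmx_neq0 n (M : 'M[R]_n) : (0 < n)%N -> M \in unitmx -> M != 0.
Proof.
move=> n_gt0 Mu; apply: contraTneq isT => M0.
have := mulVmx Mu; rewrite M0 mulmx0 => /matrixP/(_ (Ordinal n_gt0) (Ordinal n_gt0)).
by rewrite !mxE eqxx /= => /eqP; rewrite eq_sym oner_eq0.
Qed.

End QuadraticForms.

Section InnerFactor.
Variables (R : rcfType) (r : nat) (T Y : 'M[R]_r) (g1 g2 : R).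
Hypothesis g12 : g1 + g2 = 1.

Lemma mul_radi_H2 m (P Q : 'M[R]_(m, r)) :
  row_mx P Q *m radi_H2 T Y g1 g2 *m (row_mx P Q)^T
  = g1 *: (P *m T *m P^T) + g2 *: (Q *m T *m Q^T)
    + (g1 * g2) *: ((Q - P) *m (Y - T) *m (Q - P)^T).
Proof.
have -> : g1 = 1 - g2 by rewrite -g12 addrK.
rewrite /radi_H2 tr_row_mx mul_row_block mul_row_col; mx_expand.
by mx_entrywise; ring.
Qed.

Hypotheses (r_gt0 : (0 < r)%N) (Y_unit : Y \in unitmx).
Hypotheses (T_psd : psd T) (W_psd : psd (Y - T)).

Lemma psd_radi_H2 : psd (radi_H2 T Y g1 g2) <-> 0 <= g1 <= 1 /\ 0 <= g2 <= 1.
Proof.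
have [TT _] := T_psd; have [WT _] := W_psd.
have T_ge0 z : 0 <= qform T z := T_psd.2 z.
have W_ge0 z : 0 <= qform (Y - T) z := W_psd.2 z.
have YT : Y^T = Y by rewrite -(subrK T Y) trmxD WT TT.
have entryE (a b c : R) (A B C : 'M[R]_1) :
  (a *: A + b *: B + c *: C) 0 0 = a * A 0 0 + b * B 0 0 + c * C 0 0.
  by rewrite !mxE.
have qf_H2 a b : qform (radi_H2 T Y g1 g2) (col_mx a b)
    = g1 * qform T a + g2 * qform T b + (g1 * g2) * qform (Y - T) (b - a).
  rewrite /qform -[col_mx a b]trmxK tr_col_mx trmxK mul_radi_H2 trmxB !trmxK.
  by rewrite entryE trmxB.
have g_ge0 (g g' : R) : g + g' = 1 ->
    (forall z, 0 <= g * qform T z + g * g' * qform (Y - T) z) -> 0 <= g.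
  move=> gg' H2_ge0; rewrite leNgt; apply/negP => g_lt0.
  suff Y0 : Y = 0 by have := unitmx_neq0 r_gt0 Y_unit; rewrite Y0 eqxx.
  apply: sym_qf_eq0 => // z.
  have -> : qform Y z = qform T z + qform (Y - T) z.
    by rewrite -qformD addrC subrK.
  have := H2_ge0 z; have := T_ge0 z; have := W_ge0 z.
  move: (qform T z) (qform (Y - T) z) => t w w_ge0 t_ge0 H2z.
  have : t + g' * w <= 0 by nra.
  have : w <= g' * w by nra.
  lra.
split=> [[_ H2_ge0] | [/andP[g1_ge0 _] /andP[g2_ge0 _]]].
  have g1_ge0 : 0 <= g1.
    apply: (g_ge0 g1 g2 g12) => z; have := H2_ge0 (col_mx z 0).
    by rewrite -/(qform _ _) qf_H2 sub0r qformNv qformv0 mulr0 addr0.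
  have g2_ge0 : 0 <= g2.
    apply: (g_ge0 g2 g1); first by rewrite addrC.
    move=> z; have := H2_ge0 (col_mx 0 z).
    by rewrite -/(qform _ _) qf_H2 subr0 qformv0 mulr0 add0r [g1 * g2]mulrC.
  by rewrite -g12 lerDl lerDr g1_ge0 g2_ge0.
split.
  by rewrite /radi_H2 tr_block_mx !(trmxD, trmxN, trmxZ) TT YT.
move=> x; rewrite -(vsubmxK x) -/(qform _ _) qf_H2.
by rewrite !addr_ge0 ?mulr_ge0 ?T_ge0 ?W_ge0.
Qed.

End InnerFactor.

Section RiccatiOperator.
Variables (R : rcfType) (d p q : nat) (A E : 'M[R]_d) (B : 'M[R]_(d, p)).
Variables (C : 'M[R]_(q, d)) (H : 'M[R]_p).
Local Notation ric := (riccati A E B C H).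

Lemma riccatiDr (X D : 'M[R]_d) :
  ric (X + D) = ric X + (A^T - E^T *m X *m B *m invmx H *m B^T) *m D *m E
    + E^T *m D *m (A - B *m invmx H *m B^T *m X *m E)
    - E^T *m D *m B *m invmx H *m B^T *m D *m E.
Proof. by rewrite /riccati; mx_expand; mx_entrywise; ring. Qed.

Lemma riccati_affine_comb (g1 g2 : R) (X D : 'M[R]_d) : g1 + g2 = 1 ->
  ric (X + g2 *: D) = g1 *: ric X + g2 *: ric (X + D)
    + (g1 * g2) *: (E^T *m D *m B *m invmx H *m B^T *m D *m E).
Proof.
move=> g12; have -> : g1 = 1 - g2 by rewrite -g12 addrK.
by rewrite !riccatiDr; mx_expand; mx_entrywise; ring.
Qed.

End RiccatiOperator.

Section RadiStep.
Variables (R : rcfType) (d p q r : nat) (A E : 'M[R]_d) (B : 'M[R]_(d, p)).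
Variables (C : 'M[R]_(q, d)) (H : 'M[R]_p) (X1 : 'M[R]_d) (R1 : 'M[R]_(d, r)).
Variables (T : 'M[R]_r) (sigma : R).
Hypotheses (HT : H^T = H) (TT : T^T = T) (sigma_lt0 : sigma < 0).

Local Notation M := (radi_M A E B H X1 sigma).
Local Notation V2 := (radi_V2 A E B H X1 R1 T sigma).
Local Notation Y2 := (radi_Y2 B H V2 T sigma).
Local Notation R2 := (radi_R2 E R1 V2 Y2 sigma).
Local Notation s := (Num.sqrt (- (2 * sigma))).
Local Notation D := (V2 *m invmx Y2 *m V2^T).
Local Notation P := (E^T *m V2 *m invmx Y2).

Lemma sqr_radi_scale : s ^+ 2 = - (2 * sigma).
Proof. by rewrite sqr_sqrtr // oppr_ge0 pmulr_rle0 // ltW. Qed.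

Lemma radi_Y2_subT :
  Y2 - T = (- (2 * sigma))^-1 *: (V2^T *m B *m invmx H *m B^T *m V2).
Proof. by rewrite /radi_Y2 addrC addKr -scaleNr -invrN trmx_mul trmxK !mulmxA. Qed.

Lemma radi_Y2_sym : Y2^T = Y2.
Proof.
rewrite -(subrK T Y2) trmxD TT radi_Y2_subT trmxZ !trmx_mul !trmxK trmx_inv HT.
by rewrite !mulmxA.
Qed.

Lemma radi_gain_V2 : V2^T *m B *m invmx H *m B^T *m V2 = s ^+ 2 *: (Y2 - T).
Proof.
rewrite radi_Y2_subT scalerA sqr_radi_scale mulfV ?scale1r //.
by rewrite oppr_eq0 mulf_eq0 (lt_eqF sigma_lt0) orbF pnatr_eq0.
Qed.

Lemma radi_R2_subR1 : R2 - R1 = s *: P.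
Proof. by rewrite /radi_R2 addrC addKr. Qed.

Lemma tr_radi_P : P^T = invmx Y2 *m V2^T *m E.
Proof. by rewrite !trmx_mul trmx_inv radi_Y2_sym trmxK mulmxA. Qed.

Lemma radi_correction :
  E^T *m D *m B *m invmx H *m B^T *m D *m E = (R2 - R1) *m (Y2 - T) *m (R2 - R1)^T.
Proof.
have -> : E^T *m D *m B *m invmx H *m B^T *m D *m E
    = P *m (V2^T *m B *m invmx H *m B^T *m V2) *m P^T by rewrite tr_radi_P !mulmxA.
rewrite radi_gain_V2 radi_R2_subR1 trmxZ; move: P (Y2 - T) => Z W.
by rewrite -scalemxAr -!scalemxAl -scalemxAr scalerA -expr2.
Qed.

Hypotheses (M_unit : M \in unitmx) (Y2_unit : Y2 \in unitmx).

Lemma radi_M_V2 : M *m V2 = s *: (R1 *m T).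
Proof. by rewrite /radi_V2 -scalemxAr !mulmxA mulmxV // mul1mx. Qed.

Lemma radi_EDE : E^T *m D *m E = P *m Y2 *m P^T.
Proof. by rewrite tr_radi_P !mulmxA mulmxKV. Qed.

Lemma radi_MDE : M *m D *m E = s *: (R1 *m T *m P^T).
Proof. by rewrite tr_radi_P !mulmxA radi_M_V2 -!scalemxAl. Qed.

Hypotheses (X1T : X1^T = X1) (ric_X1 : riccati A E B C H X1 = R1 *m T *m R1^T).

Lemma radi_residual : riccati A E B C H (radi_X2 X1 V2 Y2) = R2 *m T *m R2^T.
Proof.
have closed_loop : A^T - E^T *m X1 *m B *m invmx H *m B^T = M - sigma *: E^T.
  by rewrite /radi_M addrK.
have closed_loopT : A - B *m invmx H *m B^T *m X1 *m E = (M - sigma *: E^T)^T.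
  by rewrite -closed_loop trmxB trmxK !trmx_mul trmx_inv HT X1T !trmxK !mulmxA.
have DT : D^T = D by rewrite !trmx_mul trmxK trmx_inv radi_Y2_sym mulmxA.
have closed_loop_DE : (M - sigma *: E^T) *m D *m E
    = s *: (R1 *m T *m P^T) - sigma *: (P *m Y2 *m P^T).
  by rewrite -radi_MDE -radi_EDE !mulmxBl -!scalemxAl.
have R2_def : R2 = R1 + s *: P by rewrite -radi_R2_subR1 addrC subrK.
rewrite /radi_X2 riccatiDr ric_X1 closed_loop closed_loopT radi_correction.
have -> : E^T *m D *m (M - sigma *: E^T)^T = ((M - sigma *: E^T) *m D *m E)^T.
  by rewrite 2!trmx_mul DT !mulmxA.
rewrite closed_loop_DE R2_def; have := sqr_radi_scale; have := radi_Y2_sym.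
move: s P Y2 => t Z Y YT tt; rewrite (_ : sigma = - (t ^+ 2) / 2); last first.
  by rewrite tt; field.
mx_expand; rewrite ?YT ?TT.
by mx_entrywise; field.
Qed.

End RadiStep.

Theorem theorem3 (R : rcfType) (d p q r : nat)
  (A E : 'M[R]_d) (B : 'M[R]_(d, p)) (C : 'M[R]_(q, d)) (H : 'M[R]_p)
  (X1 : 'M[R]_d) (R1 : 'M[R]_(d, r)) (T : 'M[R]_r) (sigma g1 g2 : R) :
  (0 < r)%N ->
  spd H ->
  X1^T = X1 ->
  riccati A E B C H X1 = R1 *m T *m R1^T ->
  T^T = T ->
  sigma < 0 ->
  radi_M A E B H X1 sigma \in unitmx ->
  radi_Y2 B H (radi_V2 A E B H X1 R1 T sigma) T sigma \in unitmx ->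
  psd T ->
  g1 + g2 = 1 ->
  let V2 := radi_V2 A E B H X1 R1 T sigma in
  let Y2 := radi_Y2 B H V2 T sigma in
  let X2 := radi_X2 X1 V2 Y2 in
  let R2 := radi_R2 E R1 V2 Y2 sigma in
  let H2 := radi_H2 T Y2 g1 g2 in
  riccati A E B C H (g1 *: X1 + g2 *: X2)
    = row_mx R1 R2 *m H2 *m (row_mx R1 R2)^T
  /\ (psd H2 <-> (0 <= g1 <= 1 /\ 0 <= g2 <= 1)).
Proof.
move=> r_gt0 H_spd X1T ric_X1 TT sigma_lt0 M_unit Y2_unit T_psd g12 V2 Y2 X2 R2 H2.
have HT := H_spd.1.
have W_psd : psd (Y2 - T).
  rewrite radi_Y2_subT; apply: psd_scale; first by rewrite invr_ge0 oppr_ge0 pmulr_rle0 // ltW.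
  rewrite (_ : _ *m V2 = V2^T *m B *m invmx H *m (V2^T *m B)^T).
    exact/psd_congr/spd_psd_invmx.
  by rewrite trmx_mul trmxK !mulmxA.
have -> : g1 *: X1 + g2 *: X2 = X1 + g2 *: (V2 *m invmx Y2 *m V2^T).
  by rewrite /X2 /radi_X2 scalerDr addrA -scalerDl g12 scale1r.
split; last exact: psd_radi_H2.
rewrite (riccati_affine_comb _ _ _ _ _ _ _ g12) ric_X1.
rewrite (radi_residual HT TT sigma_lt0 M_unit Y2_unit X1T ric_X1) radi_correction //.
by rewrite mul_radi_H2.
Qed.
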